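(* Let $\mathbf{A}_C\in\{0,1\}^{U\times N}$, $\mathcal{E}=\{(i,j): [\mathbf{A}_C]_{ij}=1\}$, $\mathbf{B}=\mathbf{A}_C^T\mathbf{A}_C$, and let $\mathbf{u}$ be a unit-norm eigenvector of $\mathbf{B}$ with nonnegative entries associated with $\lambda_{\max}(\mathbf{B})$. For $\mathcal{E}_{\mathcal{R}}\subseteq\mathcal{E}$ define $$f(\mathcal{E}_{\mathcal{R}})=2\sum_{(i,j)\in\mathcal{E}_{\mathcal{R}}}\mathbf{u}^T\mathbf{A}_C^T\mathbf{e}^U_i[\mathbf{u}]_j-\sum_{i=1}^{U}\ \sum_{j:(i,j)\in\mathcal{E}_{\mathcal{R}}}\ \sum_{s:(i,s)\in\mathcal{E}_{\mathcal{R}}}[\mathbf{u}]_j[\mathbf{u}]_s .$$ Then $f$ is a monotone (nondecreasing) submodular set function on subsets of $\mathcal{E}$; that is, for all $\mathcal{E}_{\mathcal{R}1}\subseteq\mathcal{E}_{\mathcal{R}2}\subseteq\mathcal{E}$ we have $f(\mathcal{E}_{\mathcal{R}2})\ge f(\mathcal{E}_{\mathcal{R}1})$, and for every $e\in\mathcal{E}\setminus\mathcal{E}_{\mathcal{R}2}$, $$f(\mathcal{E}_{\mathcal{R}2}\cup\{e\})-f(\mathcal{E}_{\mathcal{R}2})\le f(\mathcal{E}_{\mathcal{R}1}\cup\{e\})-f(\mathcal{E}_{\mathcal{R}1}).$$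
   Context: $\mathbf{A}_C$ is the adjacency matrix of a bipartite user–host access graph with $U$ users and $N$ hosts; $\mathcal{E}$ is its edge set. $\mathbf{e}^U_i$ is the $U\times1$ canonical basis vector with $1$ in position $i$. $\lambda_{\max}(\mathbf{B})$ is the largest eigenvalue of $\mathbf{B}$; $[\mathbf{u}]_j$ is the $j$-th entry of $\mathbf{u}$. *)

From mathcomp Require Import all_boot all_order all_algebra.
From mathcomp Require Import all_reals.
Set Implicit Arguments. Unset Strict Implicit. Unset Printing Implicit Defensive.
Import Order.TTheory GRing.Theory Num.Theory.
Local Open Scope ring_scope.

Definition edges (R : realType) (U N : nat) (A : 'M[R]_(U, N)) : {set 'I_U * 'I_N} :=
  [set e | A e.1 e.2 == 1].

Definition ebasis (R : realType) (U : nat) (i : 'I_U) : 'cV[R]_U := delta_mx i 0.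

Definition fobj (R : realType) (U N : nat) (A : 'M[R]_(U, N)) (u : 'cV[R]_N)
  (ER : {set 'I_U * 'I_N}) : R :=
  2 * (\sum_(e in ER) ((u^T *m A^T *m ebasis R e.1) 0 0 * u e.2 0))
  - \sum_(i < U) \sum_(j < N | (i, j) \in ER) \sum_(s < N | (i, s) \in ER)
      u j 0 * u s 0.

From mathcomp Require Import all_boot all_order all_algebra.
From mathcomp Require Import all_reals.
From mathcomp Require Import lra.
Import Order.TTheory GRing.Theory Num.Theory.
Local Open Scope ring_scope.

(* Writing c = A u and s_i(S) for the sum of u_j over the edges (i, j) of S,
   f(S) = sum_i (2 c_i s_i(S) - s_i(S)^2).  Each summand is a concave
   quadratic in s_i, nondecreasing as long as s_i <= c_i, and s_i(S) is a
   modular function of S.  Since u >= 0 and A is a 0/1 matrix, s_i(S) <= c_i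
   whenever S is a set of edges, which gives monotonicity; concavity gives
   diminishing returns. *)

Definition quad_gain {R : pzRingType} (c s : R) : R := 2 * c * s - s ^+ 2.

Lemma quad_gain_le (R : realDomainType) (c s1 s2 : R) :
  s1 <= s2 -> s2 <= c -> quad_gain c s1 <= quad_gain c s2.
Proof. by rewrite /quad_gain; nra. Qed.

Lemma quad_gain_incr_antitone (R : realDomainType) (c s1 s2 d : R) :
  s1 <= s2 -> 0 <= d ->
  quad_gain c (s2 + d) - quad_gain c s2 <= quad_gain c (s1 + d) - quad_gain c s1.
Proof. by rewrite /quad_gain; nra. Qed.

Section RowSums.
Variables (R : numDomainType) (U N : nat) (u : 'cV[R]_N).

Definition rowsel (S : {set 'I_U * 'I_N}) (i : 'I_U) : R :=
  \sum_(j < N | (i, j) \in S) u j 0.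

Lemma rowsel_setU1 (S : {set 'I_U * 'I_N}) (e : 'I_U * 'I_N) i :
  e \notin S -> rowsel (e |: S) i = rowsel S i + (i == e.1)%:R * u e.2 0.
Proof.
case: e => i0 j0 /= eS; rewrite /rowsel.
have [->|ne] := eqVneq i i0; last first.
  by rewrite mul0r addr0; apply: eq_bigl => j; rewrite !inE xpair_eqE (negbTE ne).
rewrite (bigD1 j0) ?setU11 //= mul1r addrC; congr (_ + _).
apply: eq_bigl => j; rewrite !inE xpair_eqE eqxx /=.
by have [->|] := eqVneq j j0; rewrite ?(negbTE eS) ?orbF ?andbT.
Qed.

Hypothesis u_ge0 : forall j, 0 <= u j 0.

Lemma rowsel_subset (S1 S2 : {set 'I_U * 'I_N}) i :
  S1 \subset S2 -> rowsel S1 i <= rowsel S2 i.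
Proof.
move=> /subsetP S12; rewrite /rowsel big_mkcond [leRHS]big_mkcond /=.
apply: ler_sum => j _; case: ifP => [/S12 -> //|_].
by case: ifP.
Qed.

Lemma rowsel_le_mulmx (A : 'M[R]_(U, N)) (S : {set 'I_U * 'I_N}) i :
  (forall j, 0 <= A i j) -> (forall j, (i, j) \in S -> A i j = 1) ->
  rowsel S i <= (A *m u) i 0.
Proof.
move=> A_ge0 A_S; rewrite /rowsel mxE big_mkcond /=.
apply: ler_sum => j _; case: ifP => [/A_S -> | _]; first by rewrite mul1r.
exact: mulr_ge0.
Qed.

End RowSums.

Arguments rowsel {R U N} u S i.

Section Fobj.
Variables (R : realType) (U N : nat) (A : 'M[R]_(U, N)) (u : 'cV[R]_N).

Lemma fobjE (S : {set 'I_U * 'I_N}) :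
  fobj A u S = \sum_(i < U) quad_gain ((A *m u) i 0) (rowsel u S i).
Proof.
rewrite /fobj /quad_gain sumrB; congr (_ - _); last first.
  apply: eq_bigr => i _; rewrite expr2 /rowsel mulr_suml.
  by apply: eq_bigr => j _; rewrite mulr_sumr.
under [RHS]eq_bigr => i _ do rewrite /rowsel mulr_sumr.
rewrite mulr_sumr pair_big_dep /=.
apply: eq_big => [[i j] //|[i j] _ /=].
by rewrite /ebasis -colE mxE -trmx_mul mxE mulrA.
Qed.

Hypothesis u_ge0 : forall j, 0 <= u j 0.

Lemma fobj_monotone (S1 S2 : {set 'I_U * 'I_N}) :
  (forall i j, 0 <= A i j) -> S1 \subset S2 -> S2 \subset edges A ->
  fobj A u S1 <= fobj A u S2.
Proof.
move=> A_ge0 S12 /subsetP S2E; rewrite !fobjE; apply: ler_sum => i _.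
apply: quad_gain_le; first exact: rowsel_subset.
by apply: rowsel_le_mulmx => // j /S2E; rewrite inE => /eqP.
Qed.

Lemma fobj_submodular (S1 S2 : {set 'I_U * 'I_N}) (e : 'I_U * 'I_N) :
  S1 \subset S2 -> e \notin S2 ->
  fobj A u (e |: S2) - fobj A u S2 <= fobj A u (e |: S1) - fobj A u S1.
Proof.
move=> S12 eS2; have eS1 : e \notin S1 by apply: contra eS2; apply: subsetP.
rewrite !fobjE -!sumrB; apply: ler_sum => i _; rewrite !rowsel_setU1 //.
apply: quad_gain_incr_antitone; first exact: rowsel_subset.
exact: mulr_ge0.
Qed.

End Fobj.

Theorem theorem1 (R : realType) (U N : nat) (A : 'M[R]_(U, N))
  (u : 'cV[R]_N) (lam : R) :
  (forall i j, A i j = 0 \/ A i j = 1) ->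
  (* lam = lambda_max(B), B = A^T A *)
  eigenvalue (A^T *m A) lam ->
  (forall mu, eigenvalue (A^T *m A) mu -> mu <= lam) ->
  (* u : unit-norm, entrywise nonnegative eigenvector for lam *)
  (A^T *m A) *m u = lam *: u ->
  \sum_(j < N) u j 0 ^+ 2 = 1 ->
  (forall j, 0 <= u j 0) ->
  forall ER1 ER2 : {set 'I_U * 'I_N},
    ER1 \subset ER2 -> ER2 \subset edges A ->
    fobj A u ER1 <= fobj A u ER2 /\
    (forall e, e \in edges A :\: ER2 ->
       fobj A u (e |: ER2) - fobj A u ER2 <= fobj A u (e |: ER1) - fobj A u ER1).
Proof.
move=> A01 _ _ _ _ u_ge0 ER1 ER2 S12 S2E.
have A_ge0 i j : 0 <= A i j by case: (A01 i j) => ->.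
split; first exact: fobj_monotone.
by move=> e /setDP [_ eS2]; apply: fobj_submodular.
Qed.
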